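(* Fix $N\in\mathbb{N}$. Let $\mathrm{WCM}_N$ be the random directed multigraph on $[N]$ with $x_{ij}=1_{\{U_i^1=j\}}+1_{\{U_i^2=j\}}$ directed edges from $i$ to $j$, where $(U_i^1,U_i^2)_{i\in[N]}$ are $2N$ independent uniform random variables on $[N]$. Let $(Y_1,\dots,Y_N)$ be multinomially distributed with $2N$ trials and $N$ categories each of probability $1/N$, and given $(Y_i)$, let $\mathrm{DCM}_N(d^-,d^+)$ be the directed configuration model with out-degrees $d_i^+=2$ and in-degrees $d_i^-=Y_i$ for all $i\in[N]$. Then $\mathrm{WCM}_N$ is equal in law to this (randomized) $\mathrm{DCM}_N(d^-,d^+)$.
   Context: Directed configuration model: given in-degrees $(d_i^-)$ and out-degrees $(d_i^+)$ on $[N]$ with $\sum_i d_i^-=\sum_i d_i^+=s$, give vertex $i$ a set of $d_i^+$ out-half-edges and $d_i^-$ in-half-edges. Enumerating all $s$ out-half-edges in some order, match the first one with a uniformly chosen in-half-edge, the second with a uniformly chosen remaining in-half-edge, and so on (equivalently, a uniform bijection between out- and in-half-edges). The resulting multigraph $\mathrm{DCM}_N(d^-,d^+)$ has one directed edge from $i$ to $j$ for each out-half-edge of $i$ matched with an in-half-edge of $j$ (loops and multiple edges allowed). Digraphs are identified with their matrices $(x_{ij})$ of edge multiplicities. *)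

From mathcomp Require Import all_boot all_order all_algebra.
Set Implicit Arguments. Unset Strict Implicit. Unset Printing Implicit Defensive.
Import GRing.Theory Num.Theory.
Local Open Scope ring_scope.

(* A directed multigraph on [N] = 'I_N is identified with its matrix of
   edge multiplicities x : 'M[nat]_N (x i j = number of edges i -> j). *)

Definition out_half N (dp : 'I_N -> nat) : finType := {i : 'I_N & 'I_(dp i)}.
Definition in_half N (dm : 'I_N -> nat) : finType := {j : 'I_N & 'I_(dm j)}.

(* a matching of out-half-edges to in-half-edges (a bijection when the
   degree sums agree; injective maps between sets of equal size) *)
Definition matchings N (dm dp : 'I_N -> nat) : {set {ffun out_half dp -> in_half dm}} :=
  [set f : {ffun out_half dp -> in_half dm} | injectiveb f].

Definition dcm_graph N (dm dp : 'I_N -> nat) (f : {ffun out_half dp -> in_half dm})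
  : 'M[nat]_N :=
  \matrix_(i, j) #|[set h : out_half dp | (tag h == i) && (tag (f h) == j)]|.

Definition dcm_law N (dm dp : 'I_N -> nat) (x : 'M[nat]_N) : rat :=
  #|[set f in matchings dm dp | dcm_graph f == x]|%:R / #|matchings dm dp|%:R.

(* U (i, k) = U_i^{k+1}, k in {0,1}; 2N independent uniforms on [N] *)
Definition wcm_graph N (U : {ffun 'I_N * 'I_2 -> 'I_N}) : 'M[nat]_N :=
  \matrix_(i, j) #|[set k : 'I_2 | U (i, k) == j]|.

Definition wcm_law N (x : 'M[nat]_N) : rat :=
  #|[set U : {ffun 'I_N * 'I_2 -> 'I_N} | wcm_graph U == x]|%:R / (N ^ (2 * N))%:R.

Definition multinom_pmf (n : nat) N (y : 'I_N -> nat) : rat :=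
  if (\sum_(i < N) y i)%N == n then
    (n`!)%:R / (\prod_(i < N) (y i)`!)%:R * (N%:R ^+ n)^-1
  else 0.

(* A matching f of the 2N out-half-edges determines the sample U_f in which each
   out-half-edge picks the vertex of its matched in-half-edge, and f and U_f give the
   same multigraph. For in-degrees y, the matchings with U_f = U are counted by choosing
   distinct in-half-edges of each vertex j for the cnt_U(j) half-edges aimed at j, i.e.
   prod_j y_j^(cnt_U(j)) (falling factorials). Since both y and cnt_U sum to 2N this is
   prod_j y_j! when y = cnt_U and 0 otherwise, so the multinomial weight
   (2N)! / (prod_j y_j! N^(2N)) divided by the (2N)! matchings gives every U the
   weight N^(-2N), exactly as in WCM_N. *)
From mathcomp Require Import all_boot all_order all_algebra ring.
Set Implicit Arguments. Unset Strict Implicit. Unset Printing Implicit Defensive.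
Import GRing.Theory Num.Theory.

Lemma card_tagged_at (I : finType) (T_ : I -> finType) (i : I) (P : pred {i : I & T_ i}) :
  #|[pred h | (tag h == i) && P h]| = #|[pred t : T_ i | P (Tagged T_ t)]|.
Proof.
rewrite -!sum1_card big_mkcond.
transitivity (\sum_i' \sum_(t : T_ i') ((i' == i) && P (Tagged T_ t) : nat))%N.
  rewrite (sig_big_dep (fun _ => true) (fun _ _ => true)
    (fun i' t => ((i' == i) && P (Tagged T_ t) : nat))) /=.
  by apply: eq_bigr => -[i' t] _; rewrite inE.
rewrite (bigD1 i) //= [X in (_ + X)%N]big1 => [|i' /negbTE neq_i'i]; last first.
  by apply: big1 => t _; rewrite neq_i'i.
by rewrite addn0 [in RHS]big_mkcond; apply: eq_bigr => t _; rewrite eqxx inE.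
Qed.

Lemma card_tagged_sum (I : finType) (T_ : I -> finType) :
  #|{: {i : I & T_ i}}| = (\sum_i #|T_ i|)%N.
Proof. by rewrite card_tagged sumnE big_map big_enum. Qed.

Lemma card_enum_count (T : finType) (P : pred T) : count P (enum T) = #|P|.
Proof. by rewrite -sum1_count big_enum_cond sum1_card. Qed.

Section InjectiveLifts.
Variables (B J : finType) (p : B -> J).

Lemma card_uniq_tuples_over (u : seq J) n (C : pred B) : size u = n ->
  #|[set t : n.-tuple B | [&& all C t, uniq t & map p t == u]]| =
  (\prod_j #|[pred b | C b && (p b == j)]| ^_ (count_mem j u))%N.
Proof.
(* Choose the head among the elements of [C] over [j], then recurse with the head removed from [C]. *)
elim: u n C => [|j u IHu] [|n] C //= size_u.
  by rewrite big1 // (@eq_card1 _ [tuple]) // => t; rewrite [t]tuple0 inE.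
case: size_u => size_u.
pose Cj j' := [pred b | C b && (p b == j')].
rewrite -sum1dep_card (partition_big (@thead _ _) (Cj j)) /=; last first.
  case/tupleP=> b t; rewrite theadE /= eqseq_cons.
  by case/and3P=> /andP[Cb _] _ /andP[pbj _]; apply/andP.
have tails_of b : Cj j b ->
    (\sum_(t : n.+1.-tuple B | [&& all C t, uniq t & map p t == j :: u] && (thead t == b)) 1)%N =
    #|[set t : n.-tuple B | [&& all (predD1 C b) t, uniq t & map p t == u]]|.
  move=> /andP[Cb pbj]; rewrite -sum1dep_card.
  rewrite (reindex (fun t : n.-tuple B => [tuple of b :: t])) /=; last first.
    exists (fun t : n.+1.-tuple B => [tuple of behead t]) => [t _|t /andP[_ /eqP <-]].
      exact: val_inj.
    by rewrite -tuple_eta.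
  apply: eq_bigl => t; rewrite theadE eqxx andbT /= eqseq_cons Cb pbj /=.
  rewrite all_predI all_predC has_pred1.
  by case: (b \notin t); case: (all C t); case: uniq.
have Cj_minus b j' : Cj j b -> #|[pred b' | predD1 C b b' && (p b' == j')]| =
    (#|Cj j'| - (j' == j))%N.
  move=> /andP[Cb /eqP pbj]; rewrite [#|Cj j'|](cardD1 b) inE /= Cb pbj eq_sym addKn.
  by apply: eq_card => b'; rewrite !inE /= andbA.
rewrite (eq_bigr (fun b => \prod_j' (#|Cj j'| - (j' == j)) ^_ (count_mem j' u)))%N; last first.
  move=> b Cjb; rewrite tails_of // IHu //.
  by apply: eq_bigr => j' _; rewrite Cj_minus.
rewrite sum_nat_const [in RHS](bigD1 j) // [in LHS](bigD1 j) //= eqxx subn1 add1n.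
rewrite ffactnS mulnA; congr (_ * _)%N; apply: eq_bigr => j' /negbTE nj'j.
by rewrite nj'j subn0 eq_sym nj'j.
Qed.

Lemma card_injective_lifts (A : finType) (g : A -> J) :
  #|[set f : {ffun A -> B} | injectiveb f && [forall a, p (f a) == g a]]| =
  (\prod_j #|[pred b | p b == j]| ^_ #|[pred a | g a == j]|)%N.
Proof.
have size_g : size (map g (enum A)) = #|A| by rewrite size_map cardE.
rewrite -(card_imset _ (can_inj (@fgraphK _ _))).
transitivity #|[set t : #|A|.-tuple B | [&& all predT t, uniq t & map p t == map g (enum A)]]|.
  apply: eq_card => t; rewrite inE all_predT /=; apply/imsetP/andP.
    case=> f; rewrite inE => /andP[inj_f /forallP pf] ->.
    rewrite -codom_ffun codomE -map_comp; split; first exact: inj_f.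
    by apply/eqP; apply/eq_in_map => a _; apply/eqP/pf.
  case=> uniq_t /eqP map_t; exists (Finfun t); last by rewrite FinfunK.
  rewrite inE /injectiveb /dinjectiveb -codomE codom_ffun FinfunK uniq_t /=.
  have: map p (codom (Finfun t)) = map g (enum A) by rewrite codom_ffun FinfunK.
  rewrite codomE -map_comp.
  by move/eq_in_map=> pt; apply/forallP => a; rewrite -(pt a (mem_enum _ a)).
rewrite card_uniq_tuples_over //; apply: eq_bigr => j _; congr (_ ^_ _).
by rewrite count_map card_enum_count.
Qed.
End InjectiveLifts.

Lemma prod_ffact_eq_sum (J : finType) (y c : J -> nat) :
  (\sum_j y j = \sum_j c j)%N ->
  (\prod_j y j ^_ c j)%N = if [forall j, y j == c j] then (\prod_j (y j)`!)%N else 0%N.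
Proof.
move=> sum_yc; case: forallP => [eq_yc | neq_yc].
  by apply: eq_bigr => j _; rewrite -(eqP (eq_yc j)) ffactnn.
have [/existsP[j lt_yc] | /existsPn ge_yc] := boolP [exists j, y j < c j].
  by rewrite (bigD1 j) //= ffact_small // mul0n.
case: neq_yc => j; rewrite eqn_leq andbC leqNgt ge_yc /=.
have: (\sum_j (y j - c j) == 0)%N.
  by rewrite sumnB ?sum_yc ?subnn // => i _; rewrite leqNgt ge_yc.
by rewrite sum_nat_eq0 => /forallP/(_ j); rewrite subn_eq0.
Qed.

Section DegreeTwo.
Variable N : nat.

Local Notation two := (fun _ : 'I_N => 2%N).
Local Notation half_edge := (out_half two).
Local Notation wcm_sample := {ffun 'I_N * 'I_2 -> 'I_N}.

Definition half_target (U : wcm_sample) (a : half_edge) : 'I_N := U (tag a, tagged a).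

Definition wcm_indegree (U : wcm_sample) (j : 'I_N) : nat :=
  #|[pred a | half_target U a == j]|.

Definition half_edge_of (ik : 'I_N * 'I_2) : half_edge := @Tagged _ ik.1 (fun i => 'I_(two i)) ik.2.

Definition wcm_of_matching (dm : 'I_N -> nat) (f : {ffun half_edge -> in_half dm}) : wcm_sample :=
  [ffun ik => tag (f (half_edge_of ik))].

Lemma card_half_edge : #|{: half_edge}| = (2 * N)%N.
Proof.
by rewrite card_tagged_sum (eq_bigr _ (fun i _ => card_ord 2)) sum_nat_const card_ord mulnC.
Qed.

Lemma card_in_half (dm : 'I_N -> nat) : #|{: in_half dm}| = (\sum_i dm i)%N.
Proof. by rewrite card_tagged_sum; apply: eq_bigr => i _; rewrite card_ord. Qed.

Lemma card_in_half_at (dm : 'I_N -> nat) j : #|[pred b : in_half dm | tag b == j]| = dm j.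
Proof.
transitivity #|[pred b : in_half dm | (tag b == j) && predT b]|.
  by apply: eq_card => b; rewrite !inE andbT.
by rewrite card_tagged_at -[RHS]card_ord; apply: eq_card.
Qed.

Lemma dcm_graph_wcm (dm : 'I_N -> nat) (f : {ffun half_edge -> in_half dm}) :
  dcm_graph f = wcm_graph (wcm_of_matching f).
Proof.
apply/matrixP => i j; rewrite !mxE.
rewrite (eq_card (B := [pred h | (tag h == i) && (tag (f h) == j)])) => [|h]; last by rewrite inE.
by rewrite card_tagged_at; apply: eq_card => k; rewrite !inE ffunE.
Qed.

Lemma card_matchings_onto (dm : 'I_N -> nat) (U : wcm_sample) :
  #|[set f in matchings dm two | wcm_of_matching f == U]| =
  (\prod_j dm j ^_ wcm_indegree U j)%N.
Proof.
under eq_bigr => j _ do rewrite -card_in_half_at.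
rewrite -card_injective_lifts; apply: eq_card => f; rewrite !inE; congr (_ && _).
apply/eqP/forallP => [<- [i k] | tag_f]; first by rewrite /half_target ffunE.
by apply/ffunP => -[i k]; rewrite ffunE; apply/eqP/(tag_f (half_edge_of (i, k))).
Qed.

Lemma card_dcm_graph_eq (dm : 'I_N -> nat) (x : 'M[nat]_N) :
  #|[set f in matchings dm two | dcm_graph f == x]| =
  (\sum_(U | wcm_graph U == x) \prod_j dm j ^_ wcm_indegree U j)%N.
Proof.
rewrite -sum1dep_card (partition_big (@wcm_of_matching dm) (fun U => wcm_graph U == x)) /=.
  apply: eq_bigr => U /eqP graph_U; rewrite -card_matchings_onto -sum1dep_card.
  apply: eq_bigl => f; rewrite !inE dcm_graph_wcm -andbA; congr (_ && _).
  by case: (wcm_of_matching f =P U) => [->|_]; rewrite ?graph_U ?eqxx ?andbF.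
by move=> f /andP[_]; rewrite dcm_graph_wcm.
Qed.

Lemma sum_wcm_indegree (U : wcm_sample) : (\sum_j wcm_indegree U j)%N = (2 * N)%N.
Proof.
rewrite -card_half_edge -sum1_card (partition_big (half_target U) predT) //=.
by apply: eq_bigr => j _; rewrite sum1_card.
Qed.

Definition wcm_indegrees (U : wcm_sample) : {ffun 'I_N -> 'I_((2 * N).+1)} :=
  [ffun j => inord (wcm_indegree U j)].

Lemma wcm_indegreesE U j : wcm_indegrees U j = wcm_indegree U j :> nat.
Proof. by rewrite ffunE inordK // ltnS -card_half_edge max_card. Qed.

Lemma sum_wcm_indegrees (U : wcm_sample) : (\sum_j wcm_indegrees U j)%N = (2 * N)%N.
Proof. by rewrite (eq_bigr _ (fun j _ => wcm_indegreesE U j)) sum_wcm_indegree. Qed.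

End DegreeTwo.

Local Open Scope ring_scope.

Lemma multinom_dcm_law (N : nat) (x : 'M[nat]_N) (y : {ffun 'I_N -> 'I_((2 * N).+1)}) :
  multinom_pmf (2 * N) (fun i => nat_of_ord (y i)) *
    dcm_law (fun i => nat_of_ord (y i)) (fun _ => 2%N) x =
  #|[set U | (wcm_graph U == x) && (wcm_indegrees U == y)]|%:R / (N ^ (2 * N))%:R.
Proof.
have indegrees_eq U : [forall j, y j == wcm_indegree U j :> nat] = (wcm_indegrees U == y).
  apply/forallP/eqP => [eq_y | <- j]; last by rewrite wcm_indegreesE.
  by apply/ffunP => j; apply: val_inj; rewrite /= wcm_indegreesE (eqP (eq_y j)).
rewrite /multinom_pmf /dcm_law card_dcm_graph_eq /matchings card_inj_ffuns.
rewrite card_in_half card_half_edge; case: eqP => [sum_y | sum_y]; last first.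
  rewrite mul0r; apply/esym/eqP; rewrite mulf_eq0 pnatr_eq0 cards_eq0; apply/orP; left.
  apply/eqP/setP => U; rewrite !inE; apply/negP => /andP[_ /eqP indeg_y].
  by apply: sum_y; move: (sum_wcm_indegrees U); rewrite indeg_y.
under eq_bigr => U _ do rewrite prod_ffact_eq_sum ?sum_y ?sum_wcm_indegree // indegrees_eq.
rewrite -big_mkcondr sum_nat_const sum_y ffactnn cardsE natrM.
have fact_neq0 n : n`!%:R != 0 :> rat by rewrite pnatr_eq0 -lt0n fact_gt0.
have prod_fact_neq0 : (\prod_j (y j)`!)%:R != 0 :> rat.
  by rewrite pnatr_eq0 -lt0n prodn_gt0 // => j; rewrite fact_gt0.
have pow_neq0 : (N ^ (2 * N))%:R != 0 :> rat.
  by rewrite pnatr_eq0 expn_eq0; case: (N).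
by rewrite -natrX; field; rewrite pow_neq0 fact_neq0 prod_fact_neq0.
Qed.

Theorem proposition2p1 (N : nat) (x : 'M[nat]_N) :
  wcm_law x =
  \sum_(y : {ffun 'I_N -> 'I_((2 * N).+1)})
     multinom_pmf (2 * N)%N (fun i => nat_of_ord (y i)) *
     dcm_law (fun i => nat_of_ord (y i)) (fun _ => 2%N) x.
Proof.
under eq_bigr => y _ do rewrite multinom_dcm_law.
rewrite -mulr_suml -natr_sum /wcm_law; congr (_%:R / _).
rewrite -sum1dep_card (partition_big (@wcm_indegrees N) predT) //=.
by apply: eq_bigr => y _; rewrite sum1dep_card; apply: eq_card => U; rewrite !inE.
Qed.
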